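(* Let $L/K$ be a totally and tamely ramified finite Galois extension of complete local fields with finite residue fields, let $e=[L:K]$ and $G=\mathrm{Gal}(L/K)$, and let $\pi_L,\pi_K$ be uniformizers of $L,K$ with $\pi_L^e=\pi_K$. Every $\alpha\in\mathcal{O}_L$ can be written uniquely as $\alpha=u_0+u_1\pi_L+\dots+u_{e-1}\pi_L^{e-1}$ with $u_i\in\mathcal{O}_K$. For $n\in\mathbb{Z}$, $\pi_L^n\alpha$ is a free generator of $\mathfrak{P}_L^n$ over $\mathcal{O}_K[G]$ if and only if $u_i\in\mathcal{O}_K^\times$ for all $i=0,\dots,e-1$; in particular this holds for $\alpha=1+\pi_L+\dots+\pi_L^{e-1}$.
   Context: A complete local field is a field complete with respect to a non-trivial discrete valuation. Uniformizers $\pi_L,\pi_K$ with $\pi_L^e=\pi_K$ always exist in this situation. *)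

From HB Require Import structures.
From mathcomp Require Import all_boot all_order all_algebra all_fingroup all_field.
Set Implicit Arguments. Unset Strict Implicit. Unset Printing Implicit Defensive.
Import Order.TTheory GRing.Theory Num.Theory.
Local Open Scope ring_scope.

(* A normalized discrete valuation on a field R, given as v : R -> int whose
   value at 0 is irrelevant (0 is treated as having valuation +oo). *)
Definition is_dval (R : fieldType) (v : R -> int) : Prop :=
  [/\ forall x y, x != 0 -> y != 0 -> v (x * y) = v x + v y,
      forall x y, x != 0 -> y != 0 -> x + y != 0 -> Num.min (v x) (v y) <= v (x + y)
    & exists pi, pi != 0 /\ v pi = 1].

Definition vge (R : fieldType) (v : R -> int) (m : int) (y : R) : Prop :=
  y = 0 \/ m <= v y.

Definition vring (R : fieldType) (v : R -> int) (x : R) : Prop := vge v 0 x.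
Definition vmax (R : fieldType) (v : R -> int) (x : R) : Prop := vge v 1 x.
Definition vpow (R : fieldType) (v : R -> int) (n : int) (x : R) : Prop := vge v n x.
Definition vunit (R : fieldType) (v : R -> int) (x : R) : Prop := x != 0 /\ v x = 0.

Definition vcomplete (R : fieldType) (v : R -> int) : Prop :=
  forall s : nat -> R,
    (forall M : int, exists N : nat, forall m n : nat,
        (N <= m)%N -> (N <= n)%N -> vge v M (s m - s n)) ->
    exists l : R, forall M : int, exists N : nat, forall n : nat,
        (N <= n)%N -> vge v M (s n - l).

(* the residue field O/P is finite *)
Definition finite_residue (R : fieldType) (v : R -> int) : Prop :=
  exists r : seq R, (forall y, y \in r -> vring v y) /\
    forall x, vring v x -> exists2 y, y \in r & vmax v (x - y).

Definition local_field (R : fieldType) (v : R -> int) : Prop :=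
  [/\ is_dval v, vcomplete v & finite_residue v].

Definition residue_char (R : fieldType) (v : R -> int) (p : nat) : Prop :=
  prime p /\ vmax v (p%:R : R).

Definition free_generator (K : fieldType) (L : splittingFieldType K)
    (vK : K -> int) (x : L) (M : L -> Prop) : Prop :=
  [/\ forall a : gal_of {:L} -> K, (forall g, vring vK (a g)) ->
        M (\sum_(g in ('Gal({:L} / 1%VS))%g) a g *: g x),
      forall y, M y -> exists a : gal_of {:L} -> K, (forall g, vring vK (a g)) /\
        y = \sum_(g in ('Gal({:L} / 1%VS))%g) a g *: g x
    & forall a : gal_of {:L} -> K, (forall g, vring vK (a g)) ->
        \sum_(g in ('Gal({:L} / 1%VS))%g) a g *: g x = 0 ->
        forall g, g \in ('Gal({:L} / 1%VS))%g -> a g = 0].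

(* - Discrete valuations: the ideals P^m, the strong triangle equality for
     sums whose terms have distinct valuations, and units among integers and
     roots of unity (an m-th root of unity congruent to 1 is 1 if m is a unit).
   - Total ramification: the terms c_i piL^i (i < e) have valuations in
     distinct classes mod e, so 1, piL, ..., piL^(e-1) is a K-basis of L and
     an O_K-basis of O_L (piexp_onto, piexp_ring, piexp_inj).
   - Galois action: g piL = zeta(g) piL with zeta(g)^e = 1; as G acts
     trivially on O_L/P_L and e is a unit (tameness), zeta(g) is G-invariant,
     hence in K.  zeta is an injective character of G, of order e, which gives
     the orthogonality relations for its powers.
   - sum_g a_g g(piL^n alpha) = piL^n sum_i gcoef(a)_i u_i piL^i, where
     a |-> gcoef(a) is a discrete Fourier transform, invertible over O_K since
     e is a unit. *)

From HB Require Import structures.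
From mathcomp Require Import all_boot all_order all_algebra all_fingroup all_field.
From mathcomp Require Import zify ring.
Import Order.TTheory GRing.Theory Num.Theory.
Set Implicit Arguments. Unset Strict Implicit. Unset Printing Implicit Defensive.
Local Open Scope ring_scope.

Lemma sum_root_unity (R : idomainType) (w : R) (m : nat) :
  w ^+ m = 1 -> w != 1 -> \sum_(i < m) w ^+ i = 0.
Proof.
move=> wm w1; apply/eqP; have : (w - 1) * \sum_(i < m) w ^+ i == 0.
  by rewrite -subrX1 wm subrr.
by rewrite mulf_eq0 subr_eq0 (negPf w1).
Qed.

Lemma dvdn_shift_eq (e i j : nat) :
  (i < e)%N -> (j < e)%N -> (e %| i + (e - j))%N -> i = j.
Proof. by move=> ie je /dvdnP [[|[|q]] hq]; lia. Qed.

Lemma residues_mod_eq (e i j : nat) (d : int) :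
  (i < e)%N -> (j < e)%N -> i%:Z - j%:Z = e%:Z * d -> i = j.
Proof.
move=> ie je h.
have [dn|dp|d0] := ltgtP d 0; last by move: h; rewrite d0 mulr0; lia.
  have : e%:Z * d <= e%:Z * (-1) by rewrite ler_wpM2l //; lia.
  lia.
have : e%:Z * 1 <= e%:Z * d by rewrite ler_wpM2l //; lia.
lia.
Qed.

Section DiscreteValuation.
Variables (R : fieldType) (v : R -> int).
Hypothesis Hv : is_dval v.

Lemma dvalM x y : x != 0 -> y != 0 -> v (x * y) = v x + v y.
Proof. by case: Hv => h _ _; apply: h. Qed.

Lemma dval1 : v 1 = 0.
Proof.
have h : v (1 * 1) = v 1 + v 1 := dvalM (oner_neq0 R) (oner_neq0 R).
by rewrite mulr1 in h; lia.
Qed.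

Lemma dvalN x : x != 0 -> v (- x) = v x.
Proof.
move=> x0; have m10 : (-1 : R) != 0 by rewrite oppr_eq0 oner_neq0.
have vm1 : v (-1) = 0 by have := dvalM m10 m10; rewrite mulrNN mulr1 dval1 => h; lia.
by rewrite -mulN1r dvalM // vm1 add0r.
Qed.

Lemma dvalX x k : x != 0 -> v (x ^+ k) = k%:Z * v x.
Proof.
move=> x0; elim: k => [|k IH]; first by rewrite expr0 dval1 mul0r.
by rewrite exprS dvalM ?expf_neq0 // IH intS mulrDl mul1r.
Qed.

Lemma dvalV x : x != 0 -> v x^-1 = - v x.
Proof. by move=> x0; have := dvalM x0 (invr_neq0 x0); rewrite mulfV // dval1 => h; lia. Qed.

Lemma dvalXz x (n : int) : x != 0 -> v (x ^ n) = n * v x.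
Proof.
move=> x0; case: n => n; first exact: dvalX.
change (v ((x ^+ n.+1)^-1) = Negz n * v x).
by rewrite NegzE dvalV ?expf_neq0 // dvalX // mulNr.
Qed.

Lemma vge0 m : vge v m 0. Proof. by left. Qed.

Lemma vgeN m x : vge v m x -> vge v m (- x).
Proof.
case=> [->|h]; first by rewrite oppr0; left.
by have [->|x0] := eqVneq x 0; [rewrite oppr0; left|right; rewrite dvalN].
Qed.

Lemma vgeD m x y : vge v m x -> vge v m y -> vge v m (x + y).
Proof.
case=> [->|hx]; first by rewrite add0r.
case=> [->|hy]; first by rewrite addr0; right.
have [->|x0] := eqVneq x 0; first by rewrite add0r; right.
have [->|y0] := eqVneq y 0; first by rewrite addr0; right.
have [->|s0] := eqVneq (x + y) 0; first by left.
right; case: Hv => _ hmin _; apply: le_trans (hmin _ _ x0 y0 s0).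
by rewrite le_min hx hy.
Qed.

Lemma vgeB m x y : vge v m x -> vge v m y -> vge v m (x - y).
Proof. by move=> hx hy; apply: vgeD => //; apply: vgeN. Qed.

Lemma vge_sum m (I : Type) (r : seq I) (P : pred I) (F : I -> R) :
  (forall i, P i -> vge v m (F i)) -> vge v m (\sum_(i <- r | P i) F i).
Proof. by move=> h; apply: (big_ind (vge v m)); [exact: vge0|exact: vgeD|]. Qed.

Lemma vring_sum (I : Type) (r : seq I) (P : pred I) (F : I -> R) :
  (forall i, P i -> vring v (F i)) -> vring v (\sum_(i <- r | P i) F i).
Proof. exact: vge_sum. Qed.

Lemma vgeM m k x y : vge v m x -> vge v k y -> vge v (m + k) (x * y).
Proof.
case=> [->|hx]; first by rewrite mul0r; left.
case=> [->|hy]; first by rewrite mulr0; left.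
have [->|x0] := eqVneq x 0; first by rewrite mul0r; left.
have [->|y0] := eqVneq y 0; first by rewrite mulr0; left.
by right; rewrite dvalM // lerD.
Qed.

Lemma vge_mulr m x y : vge v m x -> vring v y -> vge v m (x * y).
Proof. by move=> hx hy; have := vgeM hx hy; rewrite addr0. Qed.

Lemma vge_mull m x y : vring v x -> vge v m y -> vge v m (x * y).
Proof. by rewrite mulrC => hx hy; apply: vge_mulr. Qed.

Lemma vringM x y : vring v x -> vring v y -> vring v (x * y).
Proof. exact: vge_mulr. Qed.

Lemma vring_vunit x : vunit v x -> vring v x.
Proof. by case=> _ vx; right; rewrite vx. Qed.

Lemma vunitM x y : vunit v x -> vunit v y -> vunit v (x * y).
Proof. by case=> x0 vx [y0 vy]; split; rewrite ?mulf_neq0 // dvalM // vx vy. Qed.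

Lemma vunitV x : vunit v x -> vunit v x^-1.
Proof. by case=> x0 vx; split; rewrite ?invr_eq0 // dvalV // vx oppr0. Qed.

Lemma vunitXz x (n : int) : vunit v x -> vunit v (x ^ n).
Proof. by case=> x0 vx; split; rewrite ?expfz_neq0 // dvalXz // vx mulr0. Qed.

Lemma vunit_mul_eq1 x y : vring v x -> vring v y -> x * y = 1 -> vunit v x.
Proof.
move=> hx hy xy1; have x0 : x != 0 by apply: contra_eq_neq xy1 => ->; rewrite mul0r eq_sym oner_eq0.
have y0 : y != 0 by apply: contra_eq_neq xy1 => ->; rewrite mulr0 eq_sym oner_eq0.
have := dvalM x0 y0; rewrite xy1 dval1.
case: hx => [/eqP|hx]; first by rewrite (negPf x0).
by case: hy => [/eqP|hy]; [rewrite (negPf y0)|split => //; lia].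
Qed.

Lemma dval_dominant x y : x != 0 -> vge v (v x + 1) y -> x + y != 0 /\ v (x + y) = v x.
Proof.
move=> x0 hy; have s0 : x + y != 0.
  apply/negP; rewrite addrC addr_eq0 => /eqP yE; move: hy; rewrite yE.
  by case=> [/eqP|]; [rewrite oppr_eq0 (negPf x0)|rewrite dvalN //; lia].
split => //; have [->|y0] := eqVneq y 0; first by rewrite addr0.
have vy : v x + 1 <= v y by case: hy => // /eqP; rewrite (negPf y0).
case: Hv => _ hmin _.
have h1 := hmin _ _ x0 y0 s0.
have := hmin _ _ s0 (_ : - y != 0); rewrite oppr_eq0 addrK dvalN // => /(_ y0 x0) h2.
by move: h1 h2; rewrite !ge_min => /orP[] h1 /orP[] h2; lia.
Qed.

Lemma dval_sum_distinct k (t : 'I_k -> R) :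
  (forall i j, t i != 0 -> t j != 0 -> v (t i) = v (t j) -> i = j) ->
  (exists i, t i != 0) ->
  \sum_i t i != 0 /\ forall i, t i != 0 -> v (\sum_i t i) <= v (t i).
Proof.
move=> hdist [j tj].
case: (@arg_minP _ _ _ j (fun i => t i != 0) (fun i => v (t i)) tj) => i0 ti0 hmin.
have hrest : vge v (v (t i0) + 1) (\sum_(i | i != i0) t i).
  apply: vge_sum => i ii0; have [->|ti] := eqVneq (t i) 0; first exact: vge0.
  right; have := hmin i ti; rewrite le_eqVlt => /orP[/eqP/(hdist _ _ ti0 ti) e0|].
    by move: ii0; rewrite e0 eqxx.
  by move=> lt; lia.
have [s0 vs] := dval_dominant ti0 hrest.
by rewrite (bigD1 i0) //= vs; split => // i /hmin.
Qed.

Lemma natr_vring n : vring v (n%:R : R).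
Proof.
elim: n => [|n IH]; first exact: vge0.
by rewrite -addn1 natrD; apply: vgeD IH _; right; rewrite dval1.
Qed.

Lemma natr_vunit n : (0 < n)%N ->
  (forall p, prime p -> (p %| n)%N -> ~ vmax v (p%:R : R)) -> vunit v n%:R.
Proof.
move=> n0 hp; rewrite (prod_prime_decomp n0) natr_prod big_seq.
apply: (big_ind (vunit v)); [by split; rewrite ?oner_neq0 ?dval1|exact: vunitM|].
case=> p k /mem_prime_decomp [pp k0 pkn] /=; rewrite natrX exprnP.
apply: vunitXz; have {}hp := hp _ pp (dvdn_trans (dvdn_exp k0 (dvdnn p)) pkn).
have [p0|pz] := eqVneq (p%:R : R) 0; first by case: hp; left.
split => //; case: (natr_vring p) => [/eqP|h]; first by rewrite (negPf pz).
by apply/eqP; rewrite eq_le h andbT; apply: contra_notT hp; rewrite -ltNge => hlt; right; lia.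
Qed.

Lemma root_unity_vunit (m : nat) w : (0 < m)%N -> w ^+ m = 1 -> vunit v w.
Proof.
move=> m0 wm; have w0 : w != 0.
  by apply: contra_eq_neq wm => ->; rewrite expr0n gtn_eqF //= eq_sym oner_eq0.
split => //; have := dvalX m w0; rewrite wm dval1 => /esym/eqP.
by rewrite mulf_eq0 => /orP[|/eqP //]; lia.
Qed.

(* If m is a unit, distinct m-th roots of unity stay distinct modulo P:
   an m-th root of unity congruent to 1 is 1. *)
Lemma root_unity_congr1 (m : nat) w :
  vunit v m%:R -> w ^+ m = 1 -> vmax v (w - 1) -> w = 1.
Proof.
case=> m0 vm wm hw; have m_gt0 : (0 < m)%N by rewrite lt0n; apply: contra_neq m0 => ->.
have [w0 vw] := root_unity_vunit m_gt0 wm.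
set S := \sum_(k < m) w ^+ k.
have hS : vmax v (S - m%:R).
  rewrite -[m in m%:R]card_ord -sumr_const -sumrB; apply: vge_sum => k _.
  rewrite subrX1; apply: vge_mulr hw _; apply: vge_sum => j _.
  by right; rewrite dvalX // vw mulr0.
have [S0|S0] := eqVneq S 0.
  move: hS; rewrite S0 sub0r => /vgeN; rewrite opprK.
  by case=> [/eqP|]; [rewrite (negPf m0)|rewrite vm].
apply/eqP; rewrite -subr_eq0; have : (w - 1) * S == 0 by rewrite -subrX1 wm subrr.
by rewrite mulf_eq0 (negPf S0) orbF.
Qed.

End DiscreteValuation.

Section ScalarEmbedding.
Variables (K : fieldType) (L : fieldExtType K).

Lemma alg_eq0 (c : K) : (c%:A == 0 :> L) = (c == 0).
Proof. by rewrite scaler_eq0 oner_eq0 orbF. Qed.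

Lemma alg_inj : injective (fun c : K => c%:A : L).
Proof. exact: (fmorph_inj (in_alg L)). Qed.

Lemma algM (a b : K) : (a * b)%:A = a%:A * b%:A :> L.
Proof. exact: (rmorphM (in_alg L)). Qed.

Lemma algX (a : K) k : (a ^+ k)%:A = a%:A ^+ k :> L.
Proof. exact: (rmorphXn (in_alg L)). Qed.

Lemma algXz (a : K) (n : int) : (a ^ n)%:A = a%:A ^ n :> L.
Proof. exact: (fmorphXz (in_alg L)). Qed.

Lemma alg_sum (I : Type) (r : seq I) (P : pred I) (F : I -> K) :
  (\sum_(i <- r | P i) F i)%:A = \sum_(i <- r | P i) (F i)%:A :> L.
Proof. exact: (rmorph_sum (in_alg L)). Qed.

End ScalarEmbedding.

Section TotallyRamified.
Variables (K : fieldType) (L : fieldExtType K) (vK : K -> int) (vL : L -> int) (piL : L).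
Hypotheses (HvL : is_dval vL)
  (Hram : forall a : K, a != 0 -> vL a%:A = (\dim {:L})%:Z * vK a)
  (piL0 : piL != 0) (vpiL : vL piL = 1).

Local Notation e := (\dim {:L}).

Definition piexp (c : nat -> K) : L := \sum_(i < e) (c i)%:A * piL ^+ i.

Lemma term_eq0 (c : K) i : (c%:A * piL ^+ i == 0) = (c == 0).
Proof. by rewrite mulf_eq0 alg_eq0 expf_eq0 (negPf piL0) andbF orbF. Qed.

Lemma dval_term (c : K) i : c != 0 -> vL (c%:A * piL ^+ i) = e%:Z * vK c + i%:Z.
Proof.
by move=> c0; rewrite dvalM ?alg_eq0 ?expf_neq0 // Hram // dvalX // vpiL mulr1.
Qed.

Lemma vring_alg (c : K) : vring vK c -> vring vL c%:A.
Proof.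
case=> [->|h]; first by rewrite scale0r; left.
by have [->|c0] := eqVneq c 0; [rewrite scale0r; left|right; rewrite Hram // mulr_ge0].
Qed.

(* The nonzero terms of piexp c have valuations in distinct classes mod e,
   so the valuation of piexp c is the least valuation of its terms. *)
Lemma dval_piexp (c : nat -> K) : (exists2 i, (i < e)%N & c i != 0) ->
  piexp c != 0 /\
  forall i, (i < e)%N -> c i != 0 -> vL (piexp c) <= e%:Z * vK (c i) + i%:Z.
Proof.
move=> [j je cj].
have [||s0 hmin] := dval_sum_distinct HvL (t := fun i : 'I_e => (c i)%:A * piL ^+ i).
- move=> i k; rewrite !term_eq0 => ci ck; rewrite !dval_term // => h.
  by apply/val_inj/(residues_mod_eq (ltn_ord i) (ltn_ord k) (d := vK (c k) - vK (c i))); lia.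
- by exists (Ordinal je); rewrite term_eq0.
split => // i ie ci; rewrite -dval_term //.
by apply: (hmin (Ordinal ie)); rewrite term_eq0.
Qed.

Lemma piexp_eq0 (c : nat -> K) : piexp c = 0 -> forall i, (i < e)%N -> c i = 0.
Proof.
move=> c0 i ie; have [//|ci] := eqVneq (c i) 0.
by have [] := dval_piexp (ex_intro2 _ _ i ie ci); rewrite c0 eqxx.
Qed.

Lemma piexp_inj (u w : nat -> K) : piexp u = piexp w -> forall i, (i < e)%N -> u i = w i.
Proof.
move=> uw i ie; apply/eqP; rewrite -subr_eq0; apply/eqP; move: i ie.
apply: piexp_eq0; rewrite -[RHS](subrr (piexp w)) -{1}uw /piexp -sumrB.
by apply: eq_bigr => i _; rewrite scalerBl mulrBl.
Qed.

(* Since there are e = [L : K] of them, the powers 1, piL, ..., piL^(e-1)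
   form a K-basis of L. *)
Lemma piexp_onto (x : L) : exists c : nat -> K, x = piexp c.
Proof.
pose X := [tuple piL ^+ i | i < e].
have Xi (i : 'I_e) : X`_i = piL ^+ i by rewrite -tnth_nth tnth_mktuple.
pose ext (k : 'I_e -> K) (i : nat) : K := odflt 0 (omap k (insub i)).
have extE k (i : 'I_e) : ext k i = k i by rewrite /ext valK.
have fX : free X.
  apply/freeP => k hk i; rewrite -extE; apply: piexp_eq0 (ltn_ord i).
  by rewrite -[RHS]hk; apply: eq_bigr => j _; rewrite extE Xi mulr_algl.
have bX : basis_of fullv X by rewrite basisEfree fX subvf size_tuple leqnn.
exists (ext (fun i => coord X i x)).
rewrite {1}(coord_basis bX (memvf x)); apply: eq_bigr => i _.
by rewrite extE Xi mulr_algl.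
Qed.

Lemma piexp_vring (c : nat -> K) :
  (forall i, (i < e)%N -> vring vK (c i)) -> vring vL (piexp c).
Proof.
move=> hc; apply: vge_sum => // i _.
apply: vge_mull => //; first exact/vring_alg/hc.
by right; rewrite dvalX // vpiL mulr1.
Qed.

Lemma piexp_ring (x : L) : vring vL x ->
  exists u : nat -> K, (forall i, (i < e)%N -> vring vK (u i)) /\ x = piexp u.
Proof.
move=> hx; have [c xc] := piexp_onto x; exists c; split => // i ie.
have [->|ci] := eqVneq (c i) 0; first by left.
have [x0 /(_ i ie ci)] := dval_piexp (ex_intro2 _ _ i ie ci).
case: hx => [/eqP|hx]; first by rewrite xc (negPf x0).
rewrite -xc => hle; right; have h0 := le_trans hx hle.
rewrite leNgt; apply/negP => dn.
have : e%:Z * vK (c i) <= e%:Z * (-1) by rewrite ler_wpM2l //; lia.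
lia.
Qed.

Lemma eq_piexp (c d : nat -> K) :
  (forall i, (i < e)%N -> c i = d i) -> piexp c = piexp d.
Proof. by move=> cd; apply: eq_bigr => i _; rewrite cd. Qed.

Lemma piexp_scale (b : K) (c : nat -> K) :
  b%:A * piexp c = piexp (fun i => b * c i).
Proof. by rewrite mulr_sumr; apply: eq_bigr => i _; rewrite mulrA -algM. Qed.

Lemma piexp_sum (I : Type) (r : seq I) (P : pred I) (c : I -> nat -> K) :
  \sum_(j <- r | P j) piexp (c j) = piexp (fun i => \sum_(j <- r | P j) c j i).
Proof.
rewrite exchange_big /=; apply: eq_bigr => i _.
by rewrite alg_sum mulr_suml.
Qed.

Lemma piexp_delta i : (i < e)%N -> piL ^+ i = piexp (fun j => ((j == i)%N%:R : K)).
Proof.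
move=> ie; rewrite /piexp (bigD1 (Ordinal ie)) //= eqxx scale1r mul1r big1 ?addr0 //.
move=> j ji; have -> : (j == i :> nat) = false.
  by apply/negbTE; apply: contra ji => /eqP ji; apply/eqP/val_inj.
by rewrite scale0r mul0r.
Qed.

End TotallyRamified.

Section GaloisAction.
Variables (K : fieldType) (L : splittingFieldType K) (vK : K -> int) (vL : L -> int)
  (piK : K) (piL : L).
Hypotheses (HvK : is_dval vK) (HvL : is_dval vL) (Hgal : galois 1%VS {:L})
  (Hram : forall a : K, a != 0 -> vL a%:A = (\dim {:L})%:Z * vK a)
  (He : vunit vK (\dim {:L})%:R)
  (piL0 : piL != 0) (vpiL : vL piL = 1) (Hpi : piL ^+ \dim {:L} = piK%:A).

Local Notation e := (\dim {:L}).
Local Notation G := 'Gal({:L} / 1%VS)%g.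
Local Notation piexp := (piexp piL).

Lemma e_gt0 : (0 < e)%N. Proof. exact: adim_gt0. Qed.

Lemma gal_in_G (g : gal_of {:L}) : g \in G.
Proof. by rewrite gal_kAut ?sub1v // kAut1E subvf. Qed.

Lemma card_G : #|G| = e.
Proof. by rewrite -(galois_dim Hgal) dimv1 divn1. Qed.

Lemma gal_alg (g : gal_of {:L}) (c : K) : g c%:A = c%:A.
Proof. by rewrite linearZ /= rmorph1. Qed.

Lemma e_vunitL : vunit vL (e%:R : L).
Proof.
case: He => e0 ve; rewrite -scaler_nat.
by split; rewrite ?alg_eq0 // Hram // ve mulr0.
Qed.

Lemma gal_piexp_raw (g : gal_of {:L}) (c : nat -> K) :
  g (piexp c) = \sum_(i < e) (c i)%:A * g piL ^+ i.
Proof.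
rewrite rmorph_sum; apply: eq_bigr => i _.
by rewrite rmorphM rmorphXn; congr (_ * _); apply: gal_alg.
Qed.

Lemma gal_piX (g : gal_of {:L}) : g piL ^+ e = piL ^+ e.
Proof.
have gX : g (piL ^+ e) = g piL ^+ e := rmorphXn _ _ _.
by rewrite -gX Hpi gal_alg.
Qed.

Lemma dval_gal_pi (g : gal_of {:L}) : vL (g piL) = 1.
Proof.
have gpi0 : g piL != 0 by rewrite fmorph_eq0.
have := dvalX HvL e gpi0; rewrite gal_piX dvalX // vpiL => h.
have e0 : e%:Z != 0 by have := e_gt0; lia.
by apply: (mulfI e0); rewrite -h.
Qed.

Lemma gal_congr (g : gal_of {:L}) (x : L) : vring vL x -> vmax vL (g x - x).
Proof.
move=> /(piexp_ring HvL Hram piL0 vpiL) [c [hc ->]].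
rewrite gal_piexp_raw -sumrB; apply: vge_sum => // i _.
rewrite -mulrBr; apply: vge_mull (vring_alg Hram (hc _ (ltn_ord i))) _ => //.
have [->|i_gt0] := posnP i; first by rewrite !expr0 subrr; left.
have vpow_i (y : L) : y != 0 -> vL y = 1 -> vmax vL (y ^+ i).
  by move=> y0 vy; right; rewrite dvalX // vy mulr1; lia.
by apply: vgeB => //; apply: vpow_i; rewrite ?fmorph_eq0 ?dval_gal_pi.
Qed.

(* g piL = rot g * piL for an e-th root of unity rot g ... *)
Definition rot (g : gal_of {:L}) : L := g piL / piL.

Lemma rot_e (g : gal_of {:L}) : rot g ^+ e = 1.
Proof. by rewrite expr_div_n gal_piX divff // expf_neq0. Qed.

(* ... which, since distinct e-th roots of unity are distinct modulo P_L
   (tameness), is fixed by G and hence lies in K. *)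
Lemma rot_fixed (t g : gal_of {:L}) : t (rot g) = rot g.
Proof.
have [r0 vr] := root_unity_vunit HvL e_gt0 (rot_e g).
set w := t (rot g) / rot g.
have we : w ^+ e = 1 by rewrite expr_div_n -rmorphXn rot_e rmorph1 divr1.
have hw : vmax vL (w - 1).
  have -> : w - 1 = (t (rot g) - rot g) * (rot g)^-1 by rewrite mulrBl divff.
  apply: vge_mulr => //; first by apply: gal_congr; right; rewrite vr.
  by right; rewrite dvalV // vr oppr0.
by have /divr1_eq := root_unity_congr1 HvL e_vunitL we hw.
Qed.

Lemma rot_in_K (g : gal_of {:L}) : exists c : K, rot g == c%:A.
Proof.
move/galois_fixedField: Hgal => fixE.
have : rot g \in fixedField G.
  by apply/fixedFieldP; [exact: memvf|move=> t _; exact: rot_fixed].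
by rewrite fixE => /vlineP [c ->]; exists c.
Qed.

Definition zeta (g : gal_of {:L}) : K := xchoose (rot_in_K g).

Lemma zetaE (g : gal_of {:L}) : g piL = (zeta g)%:A * piL.
Proof. by rewrite -(eqP (xchooseP (rot_in_K g))) divfK. Qed.

Lemma zeta_e (g : gal_of {:L}) : zeta g ^+ e = 1.
Proof.
apply: (@alg_inj _ L); rewrite algX scale1r.
by rewrite -(eqP (xchooseP (rot_in_K g))) rot_e.
Qed.

Lemma zeta_vunit (g : gal_of {:L}) : vunit vK (zeta g).
Proof. by have := root_unity_vunit HvK e_gt0 (zeta_e g). Qed.

Lemma gal_piexp (g : gal_of {:L}) (c : nat -> K) :
  g (piexp c) = piexp (fun i => c i * zeta g ^+ i).
Proof.
rewrite gal_piexp_raw; apply: eq_bigr => i _.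
by rewrite zetaE exprMn mulrA -algX -algM.
Qed.

Lemma zetaM (g h : gal_of {:L}) : zeta (g * h)%g = zeta g * zeta h.
Proof.
apply: (@alg_inj _ L); apply: (mulIf piL0); rewrite /= -zetaE galM ?memvf //.
by rewrite zetaE mulr_algl linearZ /= zetaE scalerAl scalerA.
Qed.

Lemma zeta_inj : injective zeta.
Proof.
move=> g h gh; apply/eqP/gal_eqP => x _.
by have [c ->] := piexp_onto HvL Hram piL0 vpiL x; rewrite !gal_piexp gh.
Qed.


(* zeta is an injective character of G, of order e = #|G|, onto mu_e(K);
   the orthogonality relations for its powers follow. *)
Lemma zeta_pow_nontrivial (k : nat) : ~~ (e %| k)%N -> exists t, zeta t ^+ k != 1.
Proof.
move=> ndk; case: (boolP [forall t, zeta t ^+ k == 1]); last first.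
  by rewrite negb_forall => /existsP [t ht]; exists t.
move=> /forallP hall; exfalso.
set r := (k %% e)%N.
have r_gt0 : (0 < r)%N by rewrite lt0n.
have re : (r < e)%N by rewrite ltn_pmod // e_gt0.
have zr t : zeta t ^+ r = 1.
  have := eqP (hall t).
  by rewrite (divn_eq k e) exprD mulnC exprM zeta_e expr1n mul1r.
have sz : size ('X^r - 1 : {poly K}) = r.+1 by rewrite -polyC1 size_XnsubC.
have p0 : ('X^r - 1 : {poly K}) != 0 by rewrite -size_poly_eq0 sz.
have roots : all (root ('X^r - 1)) [seq zeta t | t <- enum G].
  by apply/allP => _ /mapP [t _ ->]; rewrite rootE !hornerE zr subrr.
have uniq_roots : uniq [seq zeta t | t <- enum G].
  by rewrite map_inj_uniq ?enum_uniq //; exact: zeta_inj.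
have := max_poly_roots p0 roots uniq_roots.
by rewrite size_map -cardE card_G sz; lia.
Qed.

Lemma sum_zeta_pow (k : nat) :
  \sum_(g in G) zeta g ^+ k = if (e %| k)%N then e%:R else 0.
Proof.
case: ifP => [/dvdnP [q ->]|ndk].
  rewrite (eq_bigr (fun=> 1)) ?sumr_const ?card_G // => g _.
  by rewrite mulnC exprM zeta_e expr1n.
have [t zt] := zeta_pow_nontrivial (negbT ndk).
set S := \sum_(g in G) _.
have St : S = zeta t ^+ k * S.
  rewrite {1}/S (reindex_inj (mulgI t)) /= mulr_sumr.
  by apply: eq_big => [g|g _]; rewrite ?gal_in_G // zetaM exprMn.
apply/eqP; move/eqP: St; rewrite -subr_eq0 -{1}[S]mul1r -mulrBl mulf_eq0.
by rewrite subr_eq0 eq_sym (negPf zt).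
Qed.

(* sum_g a_g g(piL^n x) = piL^n sum_i (gcoef n a i) u_i piL^i  when x = piexp u:
   the action of K[G] on piL^n O_L is diagonal in the basis piL^n piL^i. *)
Definition gcoef (n : int) (a : gal_of {:L} -> K) (i : nat) : K :=
  \sum_(g in G) a g * zeta g ^ n * zeta g ^+ i.

Lemma galsum_piexp (n : int) (u : nat -> K) (a : gal_of {:L} -> K) :
  \sum_(g in G) a g *: g (piL ^ n * piexp u) =
  piL ^ n * piexp (fun i => gcoef n a i * u i).
Proof.
have term g : a g *: g (piL ^ n * piexp u) =
    piL ^ n * piexp (fun i => a g * zeta g ^ n * zeta g ^+ i * u i).
  have gX : g (piL ^ n) = g piL ^ n := fmorphXz _ _ _.
  have gM : g (piL ^ n * piexp u) = g (piL ^ n) * g (piexp u) := rmorphM _ _ _.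
  rewrite gM gX zetaE expfzMl -algXz gal_piexp -mulrA mulrCA scalerAr scalerAl scalerA.
  by rewrite piexp_scale; congr (_ * _); apply: eq_piexp => i _; ring.
rewrite (eq_bigr _ (fun g _ => term g)) -mulr_sumr piexp_sum.
by congr (_ * _); apply: eq_piexp => i _; rewrite /gcoef mulr_suml.
Qed.

Lemma zeta_powz_vring (g : gal_of {:L}) (n : int) : vring vK (zeta g ^ n).
Proof. exact/vring_vunit/vunitXz/zeta_vunit. Qed.

Lemma zeta_pow_vring (g : gal_of {:L}) (i : nat) : vring vK (zeta g ^+ i).
Proof. by rewrite exprnP; apply: zeta_powz_vring. Qed.

Lemma gcoef_vring (n : int) (a : gal_of {:L} -> K) (i : nat) :
  (forall g, vring vK (a g)) -> vring vK (gcoef n a i).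
Proof.
move=> ha; apply: vring_sum => // g _.
by apply: vringM => //; [apply: vringM => //; apply: zeta_powz_vring|apply: zeta_pow_vring].
Qed.

(* Fourier inversion: every integral coefficient vector is attained by
   integral weights, because e is a unit of O_K ... *)
Lemma gcoef_onto (n : int) (f : nat -> K) :
  (forall i, (i < e)%N -> vring vK (f i)) ->
  exists2 a : gal_of {:L} -> K, (forall g, vring vK (a g)) &
    forall i, (i < e)%N -> gcoef n a i = f i.
Proof.
move=> hf.
exists (fun g => e%:R^-1 * \sum_(j < e) f j * (zeta g ^ n)^-1 * zeta g ^+ (e - j)).
  move=> g; apply: vringM => //; first exact/vring_vunit/vunitV.
  apply: vring_sum => // j _; rewrite invr_expz.
  apply: vringM => //; [apply: vringM => //; [exact: hf|apply: zeta_powz_vring]|].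
  exact: zeta_pow_vring.
move=> i ie; have [e0 _] := He.
have term g : (e%:R^-1 * \sum_(j < e) f j * (zeta g ^ n)^-1 * zeta g ^+ (e - j))
    * zeta g ^ n * zeta g ^+ i = e%:R^-1 * \sum_(j < e) f j * zeta g ^+ (i + (e - j)).
  have zn0 : zeta g ^ n != 0 by rewrite expfz_neq0 //; case: (zeta_vunit g).
  rewrite -!mulrA; congr (_ * _); rewrite !mulr_suml; apply: eq_bigr => j _.
  by rewrite exprD; field.
rewrite /gcoef (eq_bigr _ (fun g _ => term g)) -mulr_sumr exchange_big /=.
rewrite (eq_bigr (fun j : 'I_e => f j * \sum_(g in G) zeta g ^+ (i + (e - j))));
  last by move=> j _; rewrite mulr_sumr.
rewrite (bigD1 (Ordinal ie)) //= [X in _ + X]big1 ?addr0 => [|j ji].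
  by rewrite sum_zeta_pow subnKC ?(ltnW ie) // dvdnn mulrCA mulVf ?mulr1.
rewrite sum_zeta_pow; case: ifP => [/(dvdn_shift_eq ie (ltn_ord j)) ij|_]; last by rewrite mulr0.
by case/eqP: ji; apply: val_inj.
Qed.

Lemma gcoef_inversion (n : int) (a : gal_of {:L} -> K) (t : gal_of {:L}) :
  \sum_(i < e) gcoef n a i * zeta t ^+ (e - i) = a t * zeta t ^ n * e%:R.
Proof.
have zt0 : zeta t != 0 by case: (zeta_vunit t).
transitivity (\sum_(g in G) a g * zeta g ^ n * \sum_(i < e) (zeta g / zeta t) ^+ i).
  rewrite /gcoef (eq_bigr (fun i : 'I_e =>
    \sum_(g in G) a g * zeta g ^ n * zeta g ^+ i * zeta t ^+ (e - i))); last first.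
    by move=> i _; rewrite mulr_suml.
  rewrite exchange_big /=; apply: eq_bigr => g _; rewrite mulr_sumr; apply: eq_bigr => i _.
  have zti : (zeta t ^+ i)^-1 = zeta t ^+ (e - i).
    by apply: mulr1_eq; rewrite -exprD subnKC ?zeta_e // ltnW.
  by rewrite expr_div_n -zti -!mulrA.
rewrite (bigD1 t) ?gal_in_G //= [X in _ + X]big1 ?addr0 => [|g /andP [_ gt]].
  rewrite divff // (eq_bigr (fun _ => 1)) ?sumr_const ?card_ord // => i _.
  by rewrite expr1n.
rewrite sum_root_unity ?mulr0 //; first by rewrite expr_div_n !zeta_e divr1.
by apply: contraNneq gt => /divr1_eq /zeta_inj ->; rewrite eqxx.
Qed.

Lemma gcoef_inj (n : int) (a : gal_of {:L} -> K) :
  (forall i, (i < e)%N -> gcoef n a i = 0) -> forall g, a g = 0.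
Proof.
move=> ha0 t; have := gcoef_inversion n a t.
rewrite big1 => [/esym/eqP|i _]; last by rewrite ha0 ?mul0r.
have [e0 _] := He; have [zt0 _] := zeta_vunit t.
by rewrite !mulf_eq0 (negPf e0) expfz_eq0 (negPf zt0) andbF !orbF => /eqP.
Qed.


Lemma galsum_mem (n : int) (u : nat -> K) (a : gal_of {:L} -> K) :
  (forall i, (i < e)%N -> vring vK (u i)) -> (forall g, vring vK (a g)) ->
  vpow vL n (\sum_(g in G) a g *: g (piL ^ n * piexp u)).
Proof.
move=> hu ha; rewrite galsum_piexp; apply: vge_mulr => //.
  by right; rewrite dvalXz // vpiL mulr1.
apply: (piexp_vring HvL Hram piL0 vpiL) => i ie.
by apply: vringM => //; [apply: gcoef_vring|apply: hu].
Qed.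

Lemma galsum_span (n : int) (u : nat -> K) :
  (forall i, (i < e)%N -> vunit vK (u i)) ->
  forall y, vpow vL n y -> exists a : gal_of {:L} -> K,
    (forall g, vring vK (a g)) /\ y = \sum_(g in G) a g *: g (piL ^ n * piexp u).
Proof.
move=> hu y hy; have pin0 : piL ^ n != 0 by rewrite expfz_neq0.
have hx : vring vL (y / piL ^ n).
  have piVn : vge vL (- n) (piL ^ n)^-1 by right; rewrite dvalV // dvalXz // vpiL mulr1.
  by have := vgeM HvL hy piVn; rewrite addrN.
have [d [hd dx]] := piexp_ring HvL Hram piL0 vpiL hx.
have [|a ha gcoefE] := gcoef_onto n (f := fun i => d i / u i).
  by move=> i ie; apply: vringM => //; [apply: hd|exact/vring_vunit/vunitV/hu].
exists a; split => //; rewrite galsum_piexp -[y](divfK pin0) dx mulrC.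
congr (_ * _); apply: eq_piexp => i ie.
by rewrite gcoefE // divfK //; case: (hu i ie).
Qed.

Lemma galsum_indep (n : int) (u : nat -> K) (a : gal_of {:L} -> K) :
  (forall i, (i < e)%N -> u i != 0) ->
  \sum_(g in G) a g *: g (piL ^ n * piexp u) = 0 -> forall g, a g = 0.
Proof.
move=> hu; rewrite galsum_piexp => /eqP; rewrite mulf_eq0 expfz_eq0 (negPf piL0) andbF /=.
move=> /eqP /(piexp_eq0 HvL Hram piL0 vpiL) hc; apply: (gcoef_inj (n := n)) => i ie.
by apply/eqP; move/eqP: (hc i ie); rewrite mulf_eq0 (negPf (hu i ie)) orbF.
Qed.

(* Conversely, if piL^n piexp u generates P_L^n, then piL^(n+i) = y yields
   gcoef * u_i = 1 with both factors integral, so u_i is a unit. *)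
Lemma galsum_span_units (n : int) (u : nat -> K) :
  (forall i, (i < e)%N -> vring vK (u i)) ->
  (forall y, vpow vL n y -> exists a : gal_of {:L} -> K,
     (forall g, vring vK (a g)) /\ y = \sum_(g in G) a g *: g (piL ^ n * piexp u)) ->
  forall i, (i < e)%N -> vunit vK (u i).
Proof.
move=> hu hspan i ie.
have hy : vpow vL n (piL ^ (n + i%:Z)) by right; rewrite dvalXz // vpiL mulr1 lerDl.
have [a [ha]] := hspan _ hy.
rewrite galsum_piexp expfzDr // => /(mulfI (expfz_neq0 n piL0)).
rewrite -exprnP (piexp_delta piL ie) => /esym/(piexp_inj HvL Hram piL0 vpiL)/(_ i ie).
rewrite eqxx mulrC => u_gcoef.
apply: (vunit_mul_eq1 HvK (hu i ie) _ u_gcoef).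
exact: gcoef_vring.
Qed.

Theorem free_generator_piexp (n : int) (u : nat -> K) :
  (forall i, (i < e)%N -> vring vK (u i)) ->
  free_generator vK (piL ^ n * piexp u) (vpow vL n) <->
  (forall i, (i < e)%N -> vunit vK (u i)).
Proof.
move=> hu; split=> [[_ hspan _]|hunit]; first exact: galsum_span_units hu hspan.
split=> [a ha|y|a _ h0 g _]; first exact: galsum_mem.
  exact: galsum_span.
by apply: (galsum_indep _ h0) => i ie; case: (hunit i ie).
Qed.

End GaloisAction.

Theorem proposition2p4 (K : fieldType) (L : splittingFieldType K)
  (vK : K -> int) (vL : L -> int) (piK : K) (piL : L) :
  local_field vK -> local_field vL ->
  (* L/K is a finite Galois extension *)
  galois 1%VS {:L} ->
  (* totally ramified: vL extends vK with ramification index e = [L:K] *)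
  (forall a : K, a != 0 -> vL (a%:A) = (\dim {:L})%:Z * vK a) ->
  (* tamely ramified: the residue characteristic does not divide e *)
  (forall p : nat, residue_char vK p -> ~~ (p %| \dim {:L})%N) ->
  (* uniformizers with piL^e = piK *)
  piK != 0 -> vK piK = 1 -> piL != 0 -> vL piL = 1 ->
  piL ^+ (\dim {:L}) = piK%:A ->
  (* unique expansion of elements of O_L *)
  (forall alpha : L, vring vL alpha ->
     exists u : nat -> K, (forall i, (i < \dim {:L})%N -> vring vK (u i)) /\
       alpha = \sum_(i < \dim {:L}) (u i)%:A * piL ^+ i) /\
  (forall u w : nat -> K,
     (forall i, (i < \dim {:L})%N -> vring vK (u i)) ->
     (forall i, (i < \dim {:L})%N -> vring vK (w i)) ->
     \sum_(i < \dim {:L}) (u i)%:A * piL ^+ i =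
       \sum_(i < \dim {:L}) (w i)%:A * piL ^+ i ->
     forall i, (i < \dim {:L})%N -> u i = w i) /\
  (* the characterization of free generators of P_L^n *)
  (forall (n : int) (u : nat -> K),
     (forall i, (i < \dim {:L})%N -> vring vK (u i)) ->
     (free_generator vK (piL ^ n * \sum_(i < \dim {:L}) (u i)%:A * piL ^+ i)
        (vpow vL n)
      <-> (forall i, (i < \dim {:L})%N -> vunit vK (u i)))) /\
  (* in particular for alpha = 1 + piL + ... + piL^(e-1) *)
  (forall n : int,
     free_generator vK (piL ^ n * \sum_(i < \dim {:L}) piL ^+ i) (vpow vL n)).
Proof.
move=> [HvK _ _] [HvL _ _] Hgal Hram Htame _ _ piL0 vpiL Hpi.
(* Tameness means exactly that e is a unit of O_K. *)
have He : vunit vK (\dim {:L})%:R.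
  apply: (natr_vunit HvK (adim_gt0 _)) => p pp pe hp.
  by have := Htame p (conj pp hp); rewrite pe.
have free := free_generator_piexp HvK HvL Hgal Hram He piL0 vpiL Hpi.
split; first exact: piexp_ring HvL Hram piL0 vpiL.
split; first by move=> u w _ _; exact: (piexp_inj HvL Hram piL0 vpiL).
split=> // n; have unit1 : vunit vK 1 by split; rewrite ?oner_neq0 ?dval1.
have -> : \sum_(i < \dim {:L}) piL ^+ i = piexp piL (fun=> 1).
  by apply: eq_bigr => i _; rewrite scale1r mul1r.
by apply/(free n _ (fun i _ => vring_vunit unit1)).
Qed.
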